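(* Let $0<\eta_n\downarrow0$ be such that $\eta_n\log n\uparrow\infty$ as $n\uparrow\infty$. Set $$\rho_n^{\mathrm{crit}}=c^{\mathrm{crit}}_n\frac{\log n}{n\log2},\qquad c^{\mathrm{crit}}_n=2\Big[1+\frac{\log2}{2\eta_n\log n}\Big(1+\frac{3\log n}{n\log2}\Big)\Big].$$ There exists $\Omega^{\mathrm{CRIT}}\subset\Omega$ with $\mathbb P(\Omega^{\mathrm{CRIT}})=1$ such that on $\Omega^{\mathrm{CRIT}}$, for all but a finite number of indices $n$, for all $\rho\ge\rho_n^{\mathrm{crit}}$, the connected components $C_{n,l}(\rho)$, $1\le l\le L_n(\rho)$, of $V_n(\rho)$ satisfy $$2\le\max_{1\le l\le L_n(\rho)}|C_{n,l}(\rho)|\le n\eta_n .$$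
   Context: Let $\mathcal V_n=\{-1,1\}^n$ with nearest-neighbour (hypercube) graph structure. Let $(g(x))_{x\in\mathcal V_n}$, $n\ge1$, be i.i.d. standard Gaussians on $(\Omega,\mathcal F,\mathbb P)$, $\beta>0$, and $w_n(x)=\exp(-\beta\sqrt ng(x))$. For $\rho>0$ let $r_n(\rho)$ be defined by $2^{\rho n}\mathbb P(w_n(x)\ge r_n(\rho))=1$ and $V_n(\rho)=\{x\in\mathcal V_n:w_n(x)\ge r_n(\rho)\}$. The connected components $C_{n,l}(\rho)$ of $V_n(\rho)$ are the vertex sets of the connected components, with at least two vertices, of the subgraph of the hypercube induced on $V_n(\rho)$ (isolated vertices of $V_n(\rho)$ are not counted as connected components). *)

From HB Require Import structures.
From mathcomp Require Import all_boot all_order all_algebra.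
From mathcomp Require Import all_classical all_reals all_analysis.
Set Implicit Arguments. Unset Strict Implicit. Unset Printing Implicit Defensive.
Import Order.TTheory GRing.Theory Num.Theory.
Import numFieldNormedType.Exports.
Local Open Scope classical_set_scope.
Local Open Scope ring_scope.

(* Vertices of the hypercube V_n = {-1,1}^n, encoded as boolean vectors
   (true <-> +1, false <-> -1). *)
Definition vertex (n : nat) := {ffun 'I_n -> bool}.

(* Index set of the whole Gaussian family (g(x))_{x in V_n, n >= 0}. *)
Definition gindex := {n : nat & vertex n}.

Definition hadj (n : nat) : rel (vertex n) :=
  fun x y => #|finset (fun i => x i != y i)| == 1%N.

Definition induced_adj (n : nat) (V : {set vertex n}) : rel (vertex n) :=
  fun x y => [&& x \in V, y \in V & hadj x y].

Definition is_component (n : nat) (V : {set vertex n}) (C : {set vertex n}) :=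
  exists2 x, x \in V & C = finset (connect (induced_adj V) x) /\ (2 <= #|C|)%N.

Definition mutually_independent {d} {T : measurableType d} {R : realType}
  (I : eqType) (P : probability T R) (X : I -> T -> R) :=
  forall (s : seq I), uniq s ->
  forall (B : I -> set R), (forall i, measurable (B i)) ->
  P (\bigcap_(i in [set` s]) (X i @^-1` B i)) =
  \big[*%E/1%E]_(i <- s) P (X i @^-1` B i).

Definition wn {T} {R : realType} (beta : R) (g : forall n, vertex n -> T -> R)
  (n : nat) (x : vertex n) (om : T) : R :=
  expR (- (beta * Num.sqrt n%:R * g n x om)).

Definition Vn {T} {R : realType} (beta : R) (g : forall n, vertex n -> T -> R)
  (r : nat -> R -> R) (n : nat) (rho : R) (om : T) : {set vertex n} :=
  finset (fun x => r n rho <= wn beta g x om).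

Definition c_crit {R : realType} (eta : nat -> R) (n : nat) : R :=
  2 * (1 + ln 2 / (2 * eta n * ln n%:R) * (1 + 3 * ln n%:R / (n%:R * ln 2))).

Definition rho_crit {R : realType} (eta : nat -> R) (n : nat) : R :=
  c_crit eta n * ln n%:R / (n%:R * ln 2).

From HB Require Import structures.
From mathcomp Require Import all_boot all_order all_algebra.
From mathcomp Require Import all_classical all_reals all_analysis.
From mathcomp Require Import measurable_realfun ring lra zify.
Import Order.TTheory GRing.Theory Num.Theory.
Import numFieldNormedType.Exports.
Local Open Scope classical_set_scope.
Local Open Scope ring_scope.

(* A component with k vertices can be listed, starting from one of its
   vertices, by k - 1 steps that each flip one of n coordinates of one of the
   at most k vertices listed so far; hence at most 2^n (kn)^(k-1) lists of k
   distinct vertices can witness such a component, and each lies entirely in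
   V_n(rho) with probability 2^(-rho n k) by independence.  For k > n eta_n
   and rho = rho_n^crit this union bound is at most n^-5, a summable sequence,
   so Borel-Cantelli applies; a larger rho only shrinks V_n(rho). *)

Lemma connect_forward_closed (T : finType) (e : rel T) (L : pred T) x y :
  (forall y z, L y -> e y z -> L z) -> L x -> connect e x y -> L y.
Proof.
move=> closedL + /connectP[p + ->].
elim: p x => [//|z p IH] x Lx /= /andP[exz pz].
exact: IH (closedL _ _ Lx exz) pz.
Qed.

Section Exploration.
Variables (T : finType) (D : nat) (nbr : T -> 'I_D -> T) (k : nat).

Definition explore_step (x0 : T) (L : seq T) (jd : 'I_k * 'I_D) : seq T :=
  rcons L (nbr (nth x0 L jd.1) jd.2).

(* The word t = [:: (i_1, j_1); ...] lists x0, then nbr of the i_1-th listed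
   vertex in direction j_1, and so on (indices count from 0). *)
Definition explore (x0 : T) (t : seq ('I_k * 'I_D)) : seq T :=
  foldl (explore_step x0) [:: x0] t.

Lemma explore_rcons x0 t jd :
  explore x0 (rcons t jd) = explore_step x0 (explore x0 t) jd.
Proof. by rewrite /explore foldl_rcons. Qed.

Lemma size_explore x0 t : size (explore x0 t) = (size t).+1.
Proof.
elim/last_ind: t => [//|t jd IH].
by rewrite explore_rcons /explore_step size_rcons IH size_rcons.
Qed.

Lemma explore_start x0 t : x0 \in explore x0 t.
Proof.
elim/last_ind: t => [|t jd IH]; first exact: mem_head.
by rewrite explore_rcons /explore_step mem_rcons inE IH orbT.
Qed.

Variable e : rel T.
Hypothesis e_nbr : forall y z, e y z -> exists j, z = nbr y j.

Lemma exists_edge_out (L : seq T) x : x \in L -> (size L < #|connect e x|)%N ->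
  exists y z, [/\ y \in L, e y z & z \notin L].
Proof.
move=> xL ltLC; apply: contrapT => noexit.
have closedL y z : y \in L -> e y z -> z \in L.
  by move=> yL yz; apply: contrapT => /negP zL; apply: noexit; exists y, z.
have /subset_leq_card : connect e x \subset L.
  by apply/fintype.subsetP => y; exact: connect_forward_closed.
by rewrite leqNgt (leq_ltn_trans (card_size L)).
Qed.

Lemma exists_uniq_explore x m : (m < k)%N -> (m < #|connect e x|)%N ->
  exists t,
    [/\ size t = m, uniq (explore x t) & all (connect e x) (explore x t)].
Proof.
elim: m => [_ _|m IH lt_mk lt_mC]; first by exists [::]; rewrite /= connect0.
have [t [st ut ct]] := IH (ltnW lt_mk) (ltnW lt_mC).
have [y [z [yL yz zL]]] :
    exists y z, [/\ y \in explore x t, e y z & z \notin explore x t].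
  by apply: (@exists_edge_out _ x (explore_start x t)); rewrite size_explore st.
have [j def_z] := e_nbr _ _ yz; subst z.
have iy : (index y (explore x t) < k)%N.
  by rewrite (ltn_trans _ lt_mk) // -st -(size_explore x) index_mem.
exists (rcons t (Ordinal iy, j)).
rewrite explore_rcons /explore_step /= nth_index // size_rcons st.
rewrite rcons_uniq ut zL all_rcons ct !andbT; split=> //.
exact: connect_trans ((allP ct) y yL) (connect1 yz).
Qed.

End Exploration.
Arguments explore {T D} nbr {k}.
Arguments exists_uniq_explore {T D nbr k e}.

Definition vflip {n} (x : vertex n) (i : 'I_n) : vertex n :=
  [ffun j => if j == i then ~~ x j else x j].

Lemma hadj_vflip n (x y : vertex n) : hadj x y -> exists i, y = vflip x i.
Proof.
move=> /cards1P[i flip_i]; exists i; apply/ffunP => j; rewrite ffunE.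
have := congr1 (fun A : {set 'I_n} => j \in A) flip_i; rewrite /= !inE.
by case: (j == i); case: (x j); case: (y j).
Qed.

Lemma component_explore n (V C : {set vertex n}) k :
  is_component V C -> (0 < k)%N -> (k <= #|C|)%N ->
  exists x (t : (k.-1).-tuple ('I_k * 'I_n)),
    uniq (explore vflip x t) /\ {subset explore vflip x t <= V}.
Proof.
move=> [x xV [-> _]] k_gt0 le_kC.
have e_nbr y z : induced_adj V y z -> exists i, z = vflip y i.
  by move=> /and3P[_ _]; exact: hadj_vflip.
have lt_k : (k.-1 < k)%N by rewrite ltn_predL.
have [|t [st ut ct]] := exists_uniq_explore e_nbr x k.-1 lt_k.
  by rewrite -cardsE (leq_trans lt_k le_kC).
exists x, (tcast st (in_tuple t)); rewrite val_tcast; split=> // y /(allP ct).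
by apply: connect_forward_closed xV => y' z _ /and3P[].
Qed.
Arguments component_explore {n V C k}.

Lemma le_measure_bigsetU d (T : measurableType d) (R : realType)
  (mu : {measure set T -> \bar R}) (I : Type) (s : seq I) (Q : pred I)
  (F : I -> set T) : (forall i, measurable (F i)) ->
  (mu (\big[setU/set0]_(i <- s | Q i) F i) <= \sum_(i <- s | Q i) mu (F i))%E.
Proof.
move=> mF; elim: s => [|i s IH]; first by rewrite !big_nil measure0.
rewrite !big_cons; case: ifP => // _.
apply: le_trans (measureU2 _ (mF i) _) (leeD (lexx _) IH).
exact: bigsetU_measurable.
Qed.
Arguments le_measure_bigsetU {d T R} mu {I s Q F}.

Lemma independent_bigcap_preimage d (T : measurableType d) (R : realType)
  (P : probability T R) (I : eqType) (X : I -> T -> R) (B : set R) (p : R)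
  (s : seq I) : mutually_independent P X -> measurable B -> uniq s ->
  (forall i, i \in s -> P (X i @^-1` B) = p%:E) ->
  P (\bigcap_(i in [set` s]) X i @^-1` B) = (p ^+ size s)%:E.
Proof.
move=> indepX mB us PXB; rewrite (indepX s us (fun=> B) (fun=> mB)).
elim: s {us} PXB => [|i s IH] PXB; first by rewrite big_nil.
rewrite big_cons PXB ?mem_head // IH -?EFinM ?exprS // => j js.
by apply: PXB; rewrite inE js orbT.
Qed.
Arguments independent_bigcap_preimage {d T R P I X B} p {s}.

Lemma borel_cantelli_ae d (T : measurableType d) (R : realType)
  (P : probability T R) (F : (set T)^nat) : (forall n, measurable (F n)) ->
  (\sum_(0 <= n <oo) P (F n) < +oo)%E ->
  exists2 A : set T, measurable A /\ P A = 1%E &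
    forall x, A x -> \forall n \near \oo, ~ F n x.
Proof.
move=> mF sumF; exists (~` lim_sup_set F).
  have mlimsup : measurable (lim_sup_set F).
    apply: bigcap_measurable => [|k _]; first by exists 0%N.
    exact: bigcup_measurable.
  split; first exact: measurableC.
  by rewrite probability_setC // lim_sup_set_cvg0 // sube0.
move=> x notlimsup; apply: contrapT => often_F; apply: notlimsup => N _.
apply: contrapT => never_F; apply: often_F; exists N => // n /= le_Nn Fn.
by apply: never_F; exists n.
Qed.
Arguments borel_cantelli_ae {d T R} P {F}.

Section LevelSets.
Context {R : realType} {d : measure_display} {T : measurableType d}
  (P : probability T R) (g : forall n, vertex n -> T -> R) (beta : R)
  (r : nat -> R -> R).
Hypothesis mg : forall n (x : vertex n), measurable_fun setT (g n x).
Hypothesis g_indep :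
  mutually_independent P (fun i : gindex => g (tag i) (tagged i)).
Hypothesis r_level : forall n rho (x : vertex n), (1 <= n)%N -> 0 < rho ->
  ((2 `^ (rho * n%:R))%:E * P [set om | (r n rho <= wn beta g x om)%R] = 1)%E.

Definition weight_level n rho : set R :=
  [set t | r n rho <= expR (- (beta * Num.sqrt n%:R * t))].

Lemma measurable_weight_level n rho : measurable (weight_level n rho).
Proof.
rewrite -[weight_level n rho]setTI; apply: measurable_fun_le => //.
apply: measurableT_comp; first exact: measurable_expR.
apply: measurable_funN; exact: mulrl_measurable.
Qed.

Lemma measurable_site m n rho (x : vertex m) :
  measurable (g m x @^-1` weight_level n rho).
Proof.
rewrite -[_ @^-1` _]setTI.
exact: mg _ _ measurableT _ (measurable_weight_level _ _).
Qed.

Lemma prob_site n rho (x : vertex n) : (1 <= n)%N -> 0 < rho ->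
  P (g n x @^-1` weight_level n rho) = (2 `^ (- (rho * n%:R)))%:E.
Proof.
move=> n1 rho0; rewrite powRN.
have : ((2 `^ (rho * n%:R))%:E * P (g n x @^-1` weight_level n rho) = 1)%E :=
  r_level n rho x n1 rho0.
have pow_neq0 : 2 `^ (rho * n%:R) != 0 :> R by rewrite gt_eqF // powR_gt0.
case PA : (P _) => [p| |].
- move=> /eqP; rewrite -EFinM eqe => /eqP Pp; congr EFin.
  by apply: (mulfI pow_neq0); rewrite Pp mulfV.
- by rewrite mulry gtr0_sg ?powR_gt0 // mul1e.
- by rewrite mulrNy gtr0_sg ?powR_gt0 // mul1e.
Qed.

Lemma r_nondecreasing n rc rho : (1 <= n)%N -> 0 < rc -> rc <= rho ->
  r n rc <= r n rho.
Proof.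
(* Otherwise the level set at rc would be contained in the one at rho, whereas
   its probability 2^(-rc n) is larger when rc < rho. *)
move=> n1 rc0 le_rc; rewrite leNgt; apply/negP => lt_r.
pose x : vertex n := [ffun=> true].
have sub : g n x @^-1` weight_level n rc `<=` g n x @^-1` weight_level n rho.
  by move=> om /=; apply: le_trans (ltW lt_r).
have := le_measure P (mem_set (measurable_site n n rc x))
  (mem_set (measurable_site n n rho x)) sub.
rewrite /= !prob_site ?(lt_le_trans rc0) // lee_fin /powR gt_eqF // ler_expR.
rewrite ler_pM2r ?ln_gt0 ?ltr1n // lerN2 ler_pM2r ?ltr0n // => le_rho.
have rho_rc : rho = rc by apply/le_anti/andP.
by rewrite rho_rc ltxx in lt_r.
Qed.

Lemma Vn_subset n rc rho om : (1 <= n)%N -> 0 < rc -> rc <= rho ->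
  {subset Vn beta g r n rho om <= Vn beta g r n rc om}.
Proof.
move=> n1 rc0 le_rc x; rewrite !inE; exact/le_trans/r_nondecreasing.
Qed.

Definition subset_Vn_event n rho (s : seq (vertex n)) : set T :=
  [set om | {subset s <= Vn beta g r n rho om}].

Lemma subset_Vn_eventE n rho (s : seq (vertex n)) :
  subset_Vn_event n rho s = \bigcap_(i in [set` map (Tagged vertex) s])
    (g (tag i) (tagged i) @^-1` weight_level n rho).
Proof.
apply/seteqP; split=> om /= s_in.
  by move=> _ /mapP[y ys ->]; have := s_in y ys; rewrite inE.
by move=> y ys; rewrite inE; exact: (s_in (Tagged vertex y) (map_f _ ys)).
Qed.

Lemma measurable_subset_Vn_event n rho s :
  measurable (subset_Vn_event n rho s).
Proof.
rewrite subset_Vn_eventE; apply: fin_bigcap_measurable => [|i _].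
  exact: finite_seq.
exact: measurable_site.
Qed.

Lemma prob_subset_Vn_event n rho s : (1 <= n)%N -> 0 < rho -> uniq s ->
  P (subset_Vn_event n rho s) = (2 `^ (- (rho * n%:R)) ^+ size s)%:E.
Proof.
move=> n1 rho0 us; rewrite subset_Vn_eventE.
rewrite (independent_bigcap_preimage (2 `^ (- (rho * n%:R))) g_indep
  (measurable_weight_level n rho)).
- by rewrite size_map.
- by rewrite map_inj_uniq // => x y /eqP; rewrite eq_Tagged => /eqP.
- by move=> _ /mapP[x _ ->]; exact: prob_site.
Qed.

Definition explored_cluster_event n k rho : set T :=
  \big[setU/set0]_(c : vertex n * (k.-1).-tuple ('I_k * 'I_n)
                   | uniq (explore vflip c.1 c.2))
    subset_Vn_event n rho (explore vflip c.1 c.2).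

Lemma measurable_explored_cluster_event n k rho :
  measurable (explored_cluster_event n k rho).
Proof.
by apply: bigsetU_measurable => c _; exact: measurable_subset_Vn_event.
Qed.

Lemma prob_explored_cluster_event n k rho :
  (1 <= n)%N -> 0 < rho -> (0 < k)%N ->
  (P (explored_cluster_event n k rho) <=
    ((2 ^ n * (k * n) ^ k.-1)%:R * 2 `^ (- (rho * n%:R)) ^+ k)%:E)%E.
Proof.
move=> n1 rho0 k_gt0; set p := 2 `^ _.
apply: le_trans
  (le_measure_bigsetU P (fun c => measurable_subset_Vn_event _ _ _)) _.
have -> : ((2 ^ n * (k * n) ^ k.-1)%:R * p ^+ k)%:E =
    \sum_(c : vertex n * (k.-1).-tuple ('I_k * 'I_n)) (p ^+ k)%:E.
  rewrite sumEFin sumr_const card_prod card_tuple card_ffun card_bool.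
  by rewrite card_ord card_prod !card_ord mulr_natl.
rewrite big_mkcond; apply: lee_sum => c _; case: ifP => uc.
  by rewrite /= prob_subset_Vn_event // size_explore size_tuple prednK.
by rewrite lee_fin exprn_ge0 // powR_ge0.
Qed.

End LevelSets.

Section CriticalLevel.
Variables (R : realType) (eta : nat -> R) (n : nat).
Hypotheses (n_ge2 : (2 <= n)%N) (eta_gt0 : 0 < eta n).

Let ln2_gt0 : 0 < ln 2 :> R. Proof. by apply: ln_gt0; lra. Qed.
Let n_gt1 : 1 < n%:R :> R. Proof. by rewrite ltr1n. Qed.
Let n_gt0 : 0 < n%:R :> R. Proof. exact: lt_trans ltr01 n_gt1. Qed.
Let lnn_gt0 : 0 < ln n%:R :> R. Proof. exact: ln_gt0. Qed.

Lemma rho_crit_ln2 : rho_crit eta n * n%:R * ln 2 =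
  2 * ln n%:R + (ln 2 + 3 * ln n%:R / n%:R) / eta n.
Proof.
rewrite /rho_crit /c_crit; field.
by rewrite !gt_eqF.
Qed.

Lemma rho_crit_gt0 : 0 < rho_crit eta n.
Proof.
have : 0 < rho_crit eta n * n%:R * ln 2.
  rewrite rho_crit_ln2 addr_gt0 ?mulr_gt0 ?invr_gt0 ?addr_gt0 //.
  by rewrite divr_gt0 ?mulr_gt0.
by rewrite (pmulr_lgt0 _ ln2_gt0) (pmulr_lgt0 _ n_gt0).
Qed.

Lemma crit_union_bound k : n%:R * eta n <= k%:R -> (0 < k <= n)%N ->
  (2 ^ n * (k * n) ^ k.-1)%:R * 2 `^ (- (rho_crit eta n * n%:R)) ^+ k
    <= (n%:R * n.+1%:R)^-1 :> R.
Proof.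
(* With a = ln 2, L = ln n and m = a + 3 L / n, rho_crit n a = 2 L + m / eta_n,
   and the bound is expR (n a + 2 (k - 1) L - k (2 L + m / eta_n)) <= n^-5. *)
move=> le_nk /andP[k_gt0 le_kn].
set a : R := ln 2; set L : R := ln n%:R; set e := eta n.
set m := a + 3 * L / n%:R.
have expL : expR L = n%:R by rewrite lnK // posrE.
have two_pow : 2 `^ (- (rho_crit eta n * n%:R)) = expR (- (2 * L + m / e)).
  by rewrite /powR gt_eqF // mulNr rho_crit_ln2.
have pow_k : (k%:R * n%:R) ^+ k.-1 <= expR (k.-1%:R * (2 * L)) :> R.
  rewrite expRM_natl; apply: lerXn2r; rewrite ?nnegrE ?mulr_ge0 ?expR_ge0 //.
  by rewrite -[2]/(2%:R) expRM_natl expL expr2 ler_wpM2r ?ler_nat // ltW.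
have pow_n : (2 : R) ^+ n = expR (n%:R * a) by rewrite expRM_natl lnK // posrE.
have km_ge : n%:R * m <= k%:R * m / e.
  rewrite ler_pdivlMr // mulrAC ler_wpM2r // ltW // addr_gt0 //.
  by rewrite divr_gt0 // mulr_gt0.
have nm : n%:R * m = n%:R * a + 3 * L by rewrite /m; field; rewrite gt_eqF.
have k1 : k.-1%:R = k%:R - 1 :> R.
  by rewrite -[in RHS](prednK k_gt0) -natr1 addrK.
apply: (@le_trans _ _ (expR (- (5 * L)))).
  rewrite two_pow -expRM_natl natrM !natrX natrM pow_n.
  apply: le_trans (ler_wpM2r (expR_ge0 _) (ler_wpM2l (expR_ge0 _) pow_k)) _.
  rewrite -!expRD ler_expR k1 mulrBl mul1r mulrN mulrDr.
  move: km_ge; rewrite nm -mulrA; lra.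
rewrite expRN -[5]/(5%:R) expRM_natl expL.
rewrite lef_pV2 ?posrE ?mulr_gt0 ?exprn_gt0 //.
rewrite -natrX -natrM ler_nat expnS leq_mul2l; apply/orP; right.
apply: (@leq_trans (n ^ 2)); first by rewrite expnS expn1; nia.
by rewrite leq_pexp2l // (leq_trans _ n_ge2).
Qed.

End CriticalLevel.

Lemma nneseries_lty_of_le_inv_mulnS (R : realType) (u : nat -> \bar R) :
  (forall n, (0 <= u n <= 1)%E) ->
  (\forall n \near \oo, u n <= ((n%:R * n.+1%:R)^-1)%:E)%E ->
  (\sum_(0 <= n <oo) u n < +oo)%E.
Proof.
(* Beyond N1 the partial sums telescope: 1 / (p (p + 1)) = 1 / p - 1 / (p+1). *)
move=> u01 [N _ uN]; set N1 := maxn N 1.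
have u_le1 n : (u n <= 1)%E by case/andP: (u01 n).
have head m : (\sum_(0 <= i < m) u i <= m%:R%:E)%E.
  elim: m => [|m IH]; first by rewrite big_geq.
  by rewrite big_nat_recr //= -natr1 EFinD leeD.
have tail j : (\sum_(0 <= i < N1 + j) u i <= (N1%:R + 1 - (N1 + j)%:R^-1)%:E)%E.
  elim: j => [|j IH].
    rewrite addn0; apply: le_trans (head N1) _; rewrite lee_fin.
    have : (N1%:R^-1 : R) <= 1 by rewrite invf_le1 ?ler1n ?ltr0n ?leq_maxr.
    lra.
  rewrite addnS big_nat_recr //=.
  apply: le_trans (leeD IH (uN _ (leq_trans (leq_maxl _ _) (leq_addr _ _)))) _.
  have p_gt0 : 0 < (N1 + j)%:R :> R.
    by rewrite ltr0n (leq_trans _ (leq_addr _ _)) // leq_maxr.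
  rewrite -EFinD lee_fin -natr1; set p := (N1 + j)%:R.
  have -> : N1%:R + 1 - p^-1 + (p * (p + 1))^-1 = N1%:R + 1 - (p + 1)^-1.
    by field; rewrite -natrD; apply/andP; split; apply: lt0r_neq0; lra.
  done.
apply: (@le_lt_trans _ _ (N1%:R + 1)%:E); last exact: ltey.
apply: lime_le; first by apply: is_cvg_nneseries => n _; case/andP: (u01 n).
apply: nearW => m; case: (leqP m N1) => [le_mN|lt_Nm].
  apply: le_trans (head m) _; rewrite lee_fin natr1 ler_nat.
  exact: leq_trans le_mN (leqnSn _).
rewrite -(subnKC (ltnW lt_Nm)); apply: le_trans (tail _) _; rewrite lee_fin.
by rewrite lerBlDr lerDl invr_ge0.
Qed.
Arguments nneseries_lty_of_le_inv_mulnS {R u}.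

Section CriticalClusters.
Context {R : realType} {d : measure_display} {T : measurableType d}
  (P : probability T R) (g : forall n, vertex n -> T -> R) (beta : R)
  (r : nat -> R -> R) (eta : nat -> R).
Hypothesis mg : forall n (x : vertex n), measurable_fun setT (g n x).
Hypothesis g_indep :
  mutually_independent P (fun i : gindex => g (tag i) (tagged i)).
Hypothesis r_level : forall n rho (x : vertex n), (1 <= n)%N -> 0 < rho ->
  ((2 `^ (rho * n%:R))%:E * P [set om | (r n rho <= wn beta g x om)%R] = 1)%E.
Hypothesis eta_gt0 : forall n, (1 <= n)%N -> 0 < eta n.
Hypothesis eta_cvg0 : eta @ \oo --> 0.

Definition crit_size n := (Num.truncn (n%:R * eta n)).+1.

Definition crit_cluster_event n : set T :=
  explored_cluster_event g beta r n (crit_size n) (rho_crit eta n).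

Lemma measurable_crit_cluster_event n : measurable (crit_cluster_event n).
Proof. exact: measurable_explored_cluster_event. Qed.

Lemma prob_crit_cluster_event_le :
  \forall n \near \oo, (P (crit_cluster_event n) <= ((n%:R * n.+1%:R)^-1)%:E)%E.
Proof.
have eta_lt1 : \forall n \near \oo, eta n < 1 by apply: (cvgr_lt 0 eta_cvg0).
near=> n; have n2 : (2 <= n)%N by near: n; exists 2%N.
have e_gt0 := eta_gt0 n (ltnW n2).
have n_gt0 : 0 < n%:R :> R by rewrite ltr0n (ltnW n2).
apply: le_trans
  (prob_explored_cluster_event P g beta r mg g_indep r_level _ _ _ _ _ _) _.
- exact: ltnW.
- exact: rho_crit_gt0.
- by [].
rewrite lee_fin crit_union_bound // ?ltW ?truncnS_gt //=.
by rewrite truncn_lt_nat ?mulr_ge0 ?ltW // (gtr_pMr _ n_gt0); near: n.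
Unshelve. all: by end_near.
Qed.

Lemma nneseries_prob_crit_lty :
  (\sum_(0 <= n <oo) P (crit_cluster_event n) < +oo)%E.
Proof.
apply: nneseries_lty_of_le_inv_mulnS prob_crit_cluster_event_le => n.
apply/andP; split; first exact: measure_ge0.
exact/probability_le1/measurable_crit_cluster_event.
Qed.

Lemma big_component_crit_cluster n rho om (C : {set vertex n}) :
  (2 <= n)%N -> rho_crit eta n <= rho ->
  is_component (Vn beta g r n rho om) C ->
  n%:R * eta n < #|C|%:R -> crit_cluster_event n om.
Proof.
move=> n2 le_rho compC big_C; have e_gt0 := eta_gt0 n (ltnW n2).
have le_kC : (crit_size n <= #|C|)%N.
  by rewrite /crit_size truncn_lt_nat // mulr_ge0 // ltW.
have [x [t [ut tV]]] := component_explore compC (ltn0Sn _) le_kC.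
rewrite /crit_cluster_event /explored_cluster_event (bigD1 (x, t)) //=.
left => y /tV.
apply: (Vn_subset P g beta r mg r_level _ _ _ _ (ltnW n2) _ le_rho).
exact: rho_crit_gt0.
Qed.

End CriticalClusters.

Theorem lemma2p1 (R : realType) (d : measure_display) (T : measurableType d)
  (P : probability T R) (g : forall n, vertex n -> T -> R) (beta : R)
  (eta : nat -> R) (r : nat -> R -> R) :
  (forall n (x : vertex n), measurable_fun setT (g n x)) ->
  (forall n (x : vertex n) (B : set R), measurable B ->
     P (g n x @^-1` B) = normal_prob 0 1 B) ->
  mutually_independent P (fun i : gindex => g (tag i) (tagged i)) ->
  0 < beta ->
  (forall n (rho : R) (x : vertex n), (1 <= n)%N -> 0 < rho ->
     ((2 `^ (rho * n%:R))%:E * P [set om | (r n rho <= wn beta g x om)%R] = 1)%E) ->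
  (forall n, (1 <= n)%N -> 0 < eta n) ->
  (forall m n, (1 <= m)%N -> (m <= n)%N -> eta n <= eta m) ->
  eta @ \oo --> 0 ->
  (forall m n, (1 <= m)%N -> (m <= n)%N -> eta m * ln m%:R <= eta n * ln n%:R) ->
  (fun n => eta n * ln n%:R) @ \oo --> +oo ->
  exists2 OmCrit : set T, measurable OmCrit /\ P OmCrit = 1%E &
    forall om, OmCrit om ->
      \forall n \near \oo, forall rho, rho_crit eta n <= rho ->
        forall C : {set vertex n}, is_component (Vn beta g r n rho om) C ->
          (2 <= #|C|)%N /\ #|C|%:R <= n%:R * eta n.
Proof.
move=> mg _ g_indep _ r_level eta_gt0 _ eta_cvg0 _ _.
have [Om [mOm POm] rarely_crit] := borel_cantelli_ae P
  (measurable_crit_cluster_event g beta r eta mg)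
  (nneseries_prob_crit_lty P g beta r eta mg g_indep r_level eta_gt0
     eta_cvg0).
exists Om => // om /rarely_crit not_crit.
near=> n => rho le_rho C compC; split; first by case: compC => ? _ [].
rewrite leNgt; apply/negP => big_C.
have n2 : (2 <= n)%N by near: n; exists 2%N.
suff : crit_cluster_event g beta r eta n om by near: n.
exact: (big_component_crit_cluster P g beta r eta mg r_level eta_gt0 _ _ _ _
  n2 le_rho compC big_C).
Unshelve. all: by end_near.
Qed.
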